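(* For every task $h:\{-1,1\}^m\to\{-1,1\}$ (only its values on $\mathcal{X}$ mattering) we have $\deg(\mathcal{H}_{\min}(h))\le d$; that is, there exists $f:\{-1,1\}^m\to\mathbb{R}$ with $f=h$ on $\mathcal{X}$ and $\deg(f)\le d$.
   Context: Setup: integers $m\ge d\ge1$, $\mathcal{Z}=\{-1,1\}^d$, $\psi:\mathcal{Z}\to\{-1,1\}^m$ injective, $\mathcal{X}:=\psi(\mathcal{Z})$ (so $|\mathcal{X}|=2^d$). For $f:\{-1,1\}^n\to\mathbb{R}$, $f=\sum_{S\subseteq[n]}\hat f(S)\chi_S$ with $\chi_S(x)=\prod_{i\in S}x_i$ and $\deg(f)=\max\{|S|:\hat f(S)\ne0\}$. $\mathcal{H}(h)$ is the set of $f:\{-1,1\}^m\to\mathbb{R}$ agreeing with $h$ on $\mathcal{X}$, and $\deg(\mathcal{H}_{\min}(h))$ is the minimum degree of an element of $\mathcal{H}(h)$. *)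

From mathcomp Require Import all_boot all_order all_algebra.
Set Implicit Arguments. Unset Strict Implicit. Unset Printing Implicit Defensive.
Import Order.TTheory GRing.Theory Num.Theory.
Local Open Scope ring_scope.

(* The Boolean hypercube {-1,1}^n, encoded as bit vectors:
   coordinate value [b : bool] stands for [pm b] (true |-> -1, false |-> 1). *)
Definition cube (n : nat) : finType := {ffun 'I_n -> bool}.

Definition pm {R : pzRingType} (b : bool) : R := if b then -1 else 1.

Definition chi {R : pzRingType} {n : nat} (S : {set 'I_n}) (x : cube n) : R :=
  \prod_(i in S) pm (x i).

Definition fourier {R : fieldType} {n : nat} (f : cube n -> R) (S : {set 'I_n}) : R :=
  (2%:R ^+ n)^-1 * \sum_(x : cube n) f x * chi S x.

Definition fdeg {R : fieldType} {n : nat} (f : cube n -> R) : nat :=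
  \max_(S : {set 'I_n} | fourier f S != 0) #|S|.

From mathcomp Require Import all_boot all_order all_algebra.
From mathcomp Require Import ring.
Import Order.TTheory GRing.Theory Num.Theory.
Local Open Scope ring_scope.

(* Any F on a set X of points of the cube is interpolated by a polynomial
   f = sum_S c_S chi_S all of whose monomials satisfy 2^|S| <= |X|.  Induct on
   the number of coordinates on which X is not constant: pick such a coordinate
   i, write f = g + x_i h with g, h free of x_i, let h interpolate half the jump
   of F across the edges of X in direction i, and let g interpolate the
   remaining values on the projection of X along i.  A monomial x_i chi_T of f
   comes from h, whose domain has at most |X|/2 points, so 2^(|T|+1) <= |X|.
   With |X| = 2^d this bounds the degree by d. *)

Section Interpolation.

Variables (R : fieldType) (m : nat).
Hypothesis two_neq0 : (2%:R : R) != 0.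

Implicit Types (X Y : {set cube m}) (x y : cube m) (S T : {set 'I_m})
  (i : 'I_m) (c : {set 'I_m} -> R).

Definition charsum c x : R := \sum_S c S * chi S x.

Definition nonconst X : {set 'I_m} :=
  [set i | [exists x in X, exists y in X, x i != y i]].

Definition set_coord i (b : bool) x : cube m :=
  [ffun j => if j == i then b else x j].

Definition coord_free i c := forall T, c T != 0 -> i \notin T.

Definition bounded_support X c :=
  forall S, c S != 0 -> (2 ^ #|S| <= #|X|)%N /\ S \subset nonconst X.

Definition glue i c0 c1 S := if i \in S then c1 (S :\ i) else c0 S.

Definition lower_edges i X := [set x in X | ~~ x i & set_coord i true x \in X].

Lemma set_coord_at i b x : set_coord i b x i = b.
Proof. by rewrite ffunE eqxx. Qed.

Lemma set_coord_id i b x : x i = b -> set_coord i b x = x.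
Proof. by move=> xi; apply/ffunP => j; rewrite ffunE; case: eqP => [->|]. Qed.

Lemma set_coordK i b b' x : set_coord i b (set_coord i b' x) = set_coord i b x.
Proof. by apply/ffunP => j; rewrite !ffunE; case: eqP. Qed.

Lemma chi_set_coord i b T x :
  i \notin T -> chi T (set_coord i b x) = chi T x :> R.
Proof.
move=> iT; apply: eq_bigr => j jT; rewrite ffunE.
by case: eqP => // ji; rewrite -ji jT in iT.
Qed.

Lemma chi_flip i T x :
  chi T (set_coord i (~~ x i) x) = (if i \in T then -1 else 1) * chi T x :> R.
Proof.
case: ifP => [iT|/negbT iT]; last by rewrite mul1r chi_set_coord.
rewrite /chi (bigD1 i) // [in RHS](bigD1 i) //= set_coord_at mulrA.
congr (_ * _).
  by rewrite /pm; case: (x i); rewrite ?mulrN1 ?opprK ?mulN1r.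
by apply: eq_bigr => j /andP[_ /negbTE ji]; rewrite ffunE ji.
Qed.

Lemma charsum_set_coord i b c x :
  coord_free i c -> charsum c (set_coord i b x) = charsum c x.
Proof.
move=> ci; apply: eq_bigr => T _.
by case: (eqVneq (c T) 0) => [->|/ci iT]; rewrite ?mul0r ?chi_set_coord.
Qed.

Lemma charsum_glue i c0 c1 x : coord_free i c0 -> coord_free i c1 ->
  charsum (glue i c0 c1) x = charsum c0 x + pm (x i) * charsum c1 x.
Proof.
move=> c0i c1i.
have sum_free c : coord_free i c ->
    \sum_(S : {set 'I_m} | i \notin S) c S * chi S x = charsum c x.
  move=> ci; rewrite /charsum [RHS](bigID (fun S : {set 'I_m} => i \in S)) /=.
  rewrite [X in X + _]big1 ?add0r // => S iS.
  by case: (eqVneq (c S) 0) => [->|/ci]; rewrite ?mul0r ?iS.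
rewrite {1}/charsum (bigID (fun S : {set 'I_m} => i \in S)) /= [LHS]addrC.
congr (_ + _).
  by rewrite -sum_free //; apply: eq_bigr => S /negbTE; rewrite /glue => ->.
rewrite (reindex_onto (fun T : {set 'I_m} => i |: T) (fun S => S :\ i)) /=;
  last exact: setD1K.
rewrite -sum_free // mulr_sumr (eq_bigl (fun T => i \notin T)) => [|T];
  last first.
  rewrite setU11 /=; apply/eqP/idP => [<-|iT]; first by rewrite setD11.
  by rewrite setU1K.
apply: eq_bigr => T iT.
by rewrite /glue setU11 setU1K // /chi big_setU1 //= mulrCA.
Qed.

Lemma nonconstS {X Y} : X \subset Y -> nonconst X \subset nonconst Y.
Proof.
move=> /subsetP sXY; apply/subsetP => j; rewrite !in_set.
case/exists_inP => x /sXY xY /exists_inP[y /sXY yY xy].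
by apply/exists_inP; exists x => //; apply/exists_inP; exists y.
Qed.

Lemma nonconst_imset_set_coord i b X :
  nonconst (set_coord i b @: X) \subset nonconst X :\ i.
Proof.
apply/subsetP => j; rewrite in_setD1 !in_set.
case/exists_inP => _ /imsetP[x xX ->] /exists_inP[_ /imsetP[y yX ->]].
rewrite !ffunE; case: (eqVneq j i) => /= _ xy; first by rewrite eqxx in xy.
by apply/exists_inP; exists x => //; apply/exists_inP; exists y.
Qed.

Lemma nonconst_lower_edges i X :
  nonconst (lower_edges i X) \subset nonconst X :\ i.
Proof.
have sEX : lower_edges i X \subset X.
  by apply/subsetP => x; rewrite inE => /andP[].
apply/subsetP => j jE; rewrite in_setD1 (subsetP (nonconstS sEX)) // andbT.
apply: contraTneq jE => ->; rewrite in_set negb_exists_in.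
apply/forall_inP => x; rewrite inE => /and3P[_ /negbTE-> _].
rewrite negb_exists_in; apply/forall_inP => y.
by rewrite inE => /and3P[_ /negbTE->].
Qed.

Lemma card_lower_edges i X : (2 * #|lower_edges i X| <= #|X|)%N.
Proof.
set E := lower_edges i X; have Ei x : x \in E -> x i = false.
  by rewrite inE => /and3P[_ /negbTE].
have inj_up : {in E &, injective (set_coord i true)}.
  move=> x y /Ei xi /Ei yi /(congr1 (set_coord i false)).
  by rewrite !set_coordK !set_coord_id.
have disj : [disjoint E & set_coord i true @: E].
  apply/pred0P => y /=; apply/andP => -[/Ei yi /imsetP[x _ yx]].
  by move: yi; rewrite yx set_coord_at.
have [_] := leq_card_setU E (set_coord i true @: E); rewrite disj => /eqP sizeU.
rewrite mul2n -addnn -{2}(card_in_imset inj_up) -sizeU subset_leq_card //.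
apply/subsetP => y; rewrite inE => /orP[|/imsetP[x]]; rewrite inE => /and3P[//].
by move=> _ _ up ->.
Qed.

Lemma bounded_coord_free i X c :
  i \notin nonconst X -> bounded_support X c -> coord_free i c.
Proof. by move=> iX cX T /cX[_ /subsetP sT]; apply: contra iX => /sT. Qed.

Lemma bounded_support_glue i X c0 c1 : i \in nonconst X ->
    bounded_support (set_coord i false @: X) c0 ->
    bounded_support (lower_edges i X) c1 ->
  bounded_support X (glue i c0 c1).
Proof.
move=> iX c0U c1E S; rewrite /glue; case: ifP => iS.
  move=> /c1E[le_E sE]; split.
    rewrite (cardsD1 i S) iS add1n expnS.
    apply: (leq_trans _ (card_lower_edges i X)).
    by rewrite leq_mul2l le_E orbT.
  apply/subsetP => j jS; have [->//|ji] := eqVneq j i.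
  have: j \in S :\ i by rewrite in_setD1 ji.
  by move=> /(subsetP sE) /(subsetP (nonconst_lower_edges i X)) /setD1P[].
move=> /c0U[le_U sU]; split; first exact: leq_trans le_U (leq_imset_card _ _).
apply: subset_trans sU (subset_trans (nonconst_imset_set_coord i false X) _).
exact: subsetDl.
Qed.

Lemma interpolate_const X (F : cube m -> R) : nonconst X = set0 ->
  exists2 c, bounded_support X c & {in X, charsum c =1 F}.
Proof.
move=> X0; have [->|[x0 x0X]] := set_0Vmem X.
  by exists (fun _ => 0) => [S|x]; rewrite ?eqxx // inE.
have eq_x0 x : x \in X -> x = x0.
  move=> xX; apply/ffunP => j; apply/eqP/negPn/negP => xj.
  suff: j \in nonconst X by rewrite X0 inE.
  rewrite in_set; apply/exists_inP; exists x => //.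
  by apply/exists_inP; exists x0.
exists (fun S => if S == set0 then F x0 else 0) => [S /=|x /eq_x0 ->].
  case: (eqVneq S set0) => [-> _|_]; last by rewrite eqxx.
  by rewrite cards0 card_gt0 sub0set; split => //; apply/set0Pn; exists x0.
rewrite /charsum (bigD1 set0) //= eqxx big1 ?addr0 => [|S /negbTE->].
  by rewrite /chi big_set0 mulr1.
exact: mul0r.
Qed.

Lemma interpolation X (F : cube m -> R) :
  exists2 c, bounded_support X c & {in X, charsum c =1 F}.
Proof.
have [n] := ubnP #|nonconst X|; elim: n X F => // n IH X F /ltnSE ltXn.
have [/interpolate_const //|[i iX]] := set_0Vmem (nonconst X).
have lt_n Y : nonconst Y \subset nonconst X :\ i -> (#|nonconst Y| < n)%N.
  move=> sYX; have ltYX := proper_card (sub_proper_trans sYX (properD1 iX)).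
  exact: leq_trans ltYX ltXn.
have free Y c : nonconst Y \subset nonconst X :\ i -> bounded_support Y c ->
    coord_free i c.
  move=> /subsetP sYX; apply: bounded_coord_free.
  by apply/negP => /sYX; rewrite setD11.
have sEX := nonconst_lower_edges i X.
have sUX := nonconst_imset_set_coord i false X.
have [c1 c1E c1F] :=
  IH _ (fun x => (F x - F (set_coord i true x)) / 2) (lt_n _ sEX).
pose G y := if y \in X then F y - charsum c1 y
            else F (set_coord i true y) + charsum c1 y.
have [c0 c0U c0G] := IH _ G (lt_n _ sUX).
exists (glue i c0 c1); first exact: bounded_support_glue.
have c1i := free _ _ sEX c1E; have c0i := free _ _ sUX c0U.
move=> x xX; rewrite charsum_glue // -(charsum_set_coord _ false _ x c0i).
rewrite -(charsum_set_coord _ false _ x c1i) c0G ?imset_f // /G.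
case xi: (x i); last by rewrite set_coord_id // xX /pm; ring.
have up : set_coord i true (set_coord i false x) = x.
  by rewrite set_coordK set_coord_id.
case: ifP => x0X; last by rewrite up /pm; ring.
rewrite c1F /= ?up; first by field.
by rewrite inE x0X set_coord_at set_coordK set_coord_id.
Qed.

Lemma flipK i : involutive (fun x => set_coord i (~~ x i) x).
Proof. by move=> x; rewrite set_coordK set_coord_at negbK set_coord_id. Qed.

Lemma sum_chiM T S :
  \sum_x chi T x * chi S x = (if T == S then 2%:R ^+ m else 0) :> R.
Proof.
case: eqP => [<-|/eqP neTS].
  rewrite (eq_bigr (fun _ => 1)) => [|x _].
    by rewrite sumr_const card_ffun card_bool card_ord -natrX.
  rewrite /chi -big_split big1 // => j _.
  by rewrite /pm; case: (x j); rewrite /= ?mulrNN mulr1.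
have [i iTS] : exists i, (i \in T) != (i \in S).
  apply/existsP; apply: contraR neTS => /existsPn eqTS.
  by apply/eqP/setP => j; move/negPn: (eqTS j) => /eqP.
(* Flipping coordinate i, which lies in exactly one of T and S, negates
   every term. *)
set s := \sum_x _; have s_opp : s = - s.
  rewrite /s {1}(reindex_inj (can_inj (flipK i))) /= -sumrN.
  apply: eq_bigr => x _; rewrite !chi_flip.
  by move: iTS; case: (i \in T); case: (i \in S) => //= _; ring.
move/eqP: s_opp; rewrite -subr_eq0 opprK -mulr2n -mulr_natr mulf_eq0.
by rewrite (negbTE two_neq0) orbF => /eqP.
Qed.

Lemma fourier_charsum c S : fourier (charsum c) S = c S.
Proof.
have inner T :
    \sum_x c T * chi T x * chi S x = c T * (if T == S then 2%:R ^+ m else 0).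
  by rewrite -sum_chiM mulr_sumr; apply: eq_bigr => x _; rewrite mulrA.
rewrite /fourier /charsum (eq_bigr _ (fun x _ => mulr_suml _ _ _ _)).
rewrite exchange_big /=.
rewrite (eq_bigr _ (fun T _ => inner T)) (bigD1 S) //= eqxx.
rewrite big1 => [|T /negbTE->].
  by rewrite addr0 mulrC mulfK // expf_neq0.
exact: mulr0.
Qed.

End Interpolation.

Arguments charsum {R m} c x.

Theorem mainTheorem7 (R : realFieldType) (m d : nat)
    (hd : (1 <= d)%N) (hdm : (d <= m)%N)
    (psi : cube d -> cube m) (psi_inj : injective psi)
    (h : cube m -> R) (h_pm : forall x, h x = 1 \/ h x = -1) :
  exists f : cube m -> R,
    (forall z : cube d, f (psi z) = h (psi z)) /\ (fdeg f <= d)%N.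
Proof.
have two_neq0 : (2%:R : R) != 0 by rewrite pnatr_eq0.
have [c cX cF] := interpolation _ _ two_neq0 (psi @: [set: cube d]) h.
exists (charsum c); split=> [z|]; first by apply: cF; exact: imset_f.
apply/bigmax_leqP => S; rewrite fourier_charsum // => /cX[+ _].
by rewrite card_imset // cardsT card_ffun card_bool card_ord leq_exp2l.
Qed.
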